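(* For all positive integers $n$ and $d$, there exists a family of $n\cdot d+1$ mass distributions in $\mathbb{R}^d$ that cannot be simultaneously bisected by any set of $n$ hyperplanes.
   Context: A mass distribution $\mu$ on $\mathbb{R}^d$ is a measure such that all open subsets are measurable, $0<\mu(\mathbb{R}^d)<\infty$, and $\mu(S)=0$ for every lower-dimensional subset $S$. For a finite set $\mathcal{L}$ of oriented hyperplanes, each $\ell\in\mathcal{L}$ has positive side $\ell^+=\{x:g(x)\ge 0\}$ for a defining affine function $g(x)=a_1x_1+\dots+a_dx_d+a_0$; hyperplanes at infinity ($g\equiv a_0\neq0$) are allowed, with $\ell^+=\mathbb{R}^d$, $\ell^-=\emptyset$. Let $\lambda(p)$ be the number of hyperplanes having $p$ on their positive side, $R^+=\{p:\lambda(p)\text{ even}\}$, $R^-=\{p:\lambda(p)\text{ odd}\}$. $\mathcal{L}$ simultaneously bisects $\mu_1,\dots,\mu_k$ if $\mu_i(R^+)=\mu_i(R^-)$ for all $i$; an unoriented set bisects if some orientation does. *)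

From HB Require Import structures.
From mathcomp Require Import all_boot all_order all_algebra.
From mathcomp Require Import all_classical all_reals all_analysis.

Set Implicit Arguments.
Unset Strict Implicit.
Unset Printing Implicit Defensive.

Import Order.TTheory GRing.Theory Num.Theory numFieldNormedType.Exports.
Local Open Scope classical_set_scope.
Local Open Scope ring_scope.

Definition Rd (R : realType) (d : nat) :=
  g_sigma_algebraType [set A : set 'rV[R]_d | open A].

Definition affine_eval (R : realType) (d : nat) (g : 'rV[R]_d * R)
  (x : 'rV[R]_d) : R :=
  \sum_(i < d) g.1 ord0 i * x ord0 i + g.2.

(* (a, a_0) defines an oriented hyperplane (possibly the hyperplane at
   infinity, when a = 0 and a_0 <> 0) iff it is not identically zero. *)
Definition oriented_hyperplane (R : realType) (d : nat) (g : 'rV[R]_d * R) :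
  Prop := g.1 != 0 \/ g.2 != 0.

Definition pos_side (R : realType) (d : nat) (g : 'rV[R]_d * R) :
  set (Rd R d) := [set x | 0 <= affine_eval g x].

Definition lambda (R : realType) (d n : nat) (L : 'I_n -> 'rV[R]_d * R)
  (p : Rd R d) : nat :=
  #|[set j : 'I_n | `[< pos_side (L j) p >]]|.

Definition Rplus (R : realType) (d n : nat) (L : 'I_n -> 'rV[R]_d * R) :
  set (Rd R d) := [set p | ~~ odd (lambda L p)].

Definition Rminus (R : realType) (d n : nat) (L : 'I_n -> 'rV[R]_d * R) :
  set (Rd R d) := [set p | odd (lambda L p)].

(* A mass distribution on R^d: a measure on (a sigma-algebra containing) the
   open sets, with 0 < mu(R^d) < oo, vanishing on lower-dimensional sets,
   i.e. on every (affine) hyperplane (every proper affine subspace is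
   contained in one). *)
Definition mass_distribution (R : realType) (d : nat)
  (mu : {measure set (Rd R d) -> \bar R}) : Prop :=
  (0 < mu setT)%E /\ (mu setT < +oo)%E /\
  forall g : 'rV[R]_d * R, g.1 != 0 ->
    mu [set x : Rd R d | affine_eval g x = 0] = 0%E.

Definition bisects (R : realType) (d n k : nat) (L : 'I_n -> 'rV[R]_d * R)
  (mu : 'I_k -> {measure set (Rd R d) -> \bar R}) : Prop :=
  forall i, mu i (Rplus L) = mu i (Rminus L).

From HB Require Import structures.
From mathcomp Require Import all_boot all_order all_algebra.
From mathcomp Require Import all_classical all_reals all_analysis.
From mathcomp Require Import polyrcf measurable_realfun.
Import Order.TTheory GRing.Theory Num.Theory numFieldNormedType.Exports.
Local Open Scope classical_set_scope.
Local Open Scope ring_scope.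
Set Implicit Arguments.
Unset Strict Implicit.
Unset Printing Implicit Defensive.

(* Place the k-th measure on the moment curve t |-> (t, t^2, ..., t^d), as the
   image of Lebesgue measure on ]k, k+1[.  The curve meets a hyperplane g
   exactly at the real roots of the nonzero polynomial t |-> g(t, ..., t^d) of
   degree at most d, so hyperplanes are null sets.  If n hyperplanes bisect the
   k-th measure, one of them must cross the curve in ]k, k+1[: otherwise all n
   polynomials keep their sign there, the parity of lambda is constant along
   that arc, and the whole mass lies in R^+ or in R^-.  Since the intervals are
   disjoint, n d + 1 measures would require n d + 1 distinct roots among n
   polynomials having at most d roots each. *)

Lemma max_poly_roots_family (R : idomainType) (m n d : nat)
    (P : 'I_n -> {poly R}) (j : 'I_m -> 'I_n) (r : 'I_m -> R) :
    (forall i, P i != 0) -> (forall i, size (P i) <= d.+1)%N ->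
    injective r -> (forall k, root (P (j k)) (r k)) ->
  (m <= n * d)%N.
Proof.
move=> P0 sizeP r_inj rootP.
have card_fiber i : (\sum_(k < m | j k == i) 1 <= d)%N.
  rewrite sum1_card.
  pose s := [seq r k | k <- enum [pred k | j k == i]].
  have s_roots : all (root (P i)) s.
    by apply/allP => x /mapP[k]; rewrite mem_enum => /eqP <- ->.
  have s_uniq : uniq s by rewrite map_inj_uniq ?enum_uniq.
  have -> : #|[pred k | j k == i]| = size s by rewrite size_map cardE.
  rewrite -ltnS.
  exact: leq_trans (max_poly_roots (P0 i) s_roots s_uniq) (sizeP i).
rewrite -[m]card_ord -sum1_card (partition_big j predT) //=.
apply: (@leq_trans (\sum_(i < n) d)); last by rewrite sum_nat_const card_ord.
by apply: leq_sum => i _; exact: card_fiber.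
Qed.

Lemma continuous_row (T U : topologicalType) (n : nat) (F : 'I_n -> T -> U) :
  (forall i, continuous (F i)) -> continuous (fun t => \row_i F i t).
Proof.
move=> cF t A [P FtP PA].
have near_P : \forall s \near t, forall (a : 'I_1) (i : 'I_n), P a i (F i s).
  apply: filter_forall => a; apply: filter_forall => i.
  by apply: cF; move: (FtP a i); rewrite mxE.
apply: filterS near_P => s Ps; apply: PA => a i; rewrite mxE.
exact: Ps.
Qed.

Lemma unit_itv_nat_disjoint (R : realDomainType) (k1 k2 : nat) (t : R) :
  t \in `]k1%:R, k1%:R + 1[ -> t \in `]k2%:R, k2%:R + 1[ -> k1 = k2.
Proof.
have le_of_lt k k' : k%:R < t -> t < k'%:R + 1 -> (k <= k')%N.
  by move=> lo hi; rewrite -ltnS -(ltr_nat R) -natr1 (lt_trans lo hi).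
rewrite !in_itv /= => /andP[lo1 hi1] /andP[lo2 hi2].
by apply/eqP; rewrite eqn_leq (le_of_lt _ _ lo1 hi2) (le_of_lt _ _ lo2 hi1).
Qed.

Section moment_curve.
Variables (R : realType) (d : nat).

Lemma measurable_continuous_Rd (f : R -> 'rV[R]_d) :
  continuous f -> measurable_fun [set: measurableTypeR R] (f : _ -> Rd R d).
Proof.
move=> cf; apply: (@measurability _ _ _ _ _ (f : measurableTypeR R -> Rd R d)
  [set A : set 'rV[R]_d | open A]) => //.
move=> _ [A oA <-]; apply: measurableI => //; apply: open_measurable.
by apply: open_comp => // t _; exact: cf.
Qed.

Definition moment_curve (t : R) : 'rV[R]_d := \row_(i < d) t ^+ i.+1.

Lemma continuous_moment_curve : continuous moment_curve.
Proof. by apply: continuous_row => i; exact: exprn_continuous. Qed.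

(* The pushforward instance must be named: its measurability argument cannot
   be found by canonical structure inference. *)
Definition curve_measure (a : R) : {measure set (Rd R d) -> \bar R} :=
  measure_function_pushforward__canonical__measure_function_Measure
    (mrestr lebesgue_measure (measurable_itv `]a, a + 1[))
    (measurable_continuous_Rd continuous_moment_curve).

Lemma curve_measureE a A : curve_measure a A =
  lebesgue_measure (moment_curve @^-1` A `&` [set` `]a, a + 1[]).
Proof. by []. Qed.

Lemma lebesgue_measure_unit_itv (a : R) :
  lebesgue_measure [set` `]a, a + 1[] = 1%E.
Proof.
rewrite lebesgue_measure_itv /= lte_fin ltrDl ltr01.
by rewrite -EFinB addrAC subrr add0r.
Qed.

Definition hyperplane_poly (g : 'rV[R]_d * R) : {poly R} :=
  g.2%:P + \sum_(i < d) g.1 ord0 i *: 'X^(i.+1).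

Lemma hyperplane_polyE g t :
  (hyperplane_poly g).[t] = affine_eval g (moment_curve t).
Proof.
rewrite /affine_eval hornerD hornerC horner_sum addrC; congr (_ + _).
by apply: eq_bigr => i _; rewrite hornerZ hornerXn mxE.
Qed.

Lemma size_hyperplane_poly g : (size (hyperplane_poly g) <= d.+1)%N.
Proof.
apply: leq_trans (size_polyD _ _) _; rewrite geq_max size_polyC.
apply/andP; split; first by case: (_ != 0).
apply: leq_trans (size_sum _ _ _) _; apply/bigmax_leqP => i _.
by apply: leq_trans (size_scale_leq _ _) _; rewrite size_polyXn ltnS.
Qed.

Lemma coef0_hyperplane_poly g : (hyperplane_poly g)`_0 = g.2.
Proof.
rewrite coefD coefC coef_sum big1 ?addr0 // => i _.
by rewrite coefZ coefXn mulr0.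
Qed.

Lemma coefS_hyperplane_poly g (i : 'I_d) :
  (hyperplane_poly g)`_i.+1 = g.1 ord0 i.
Proof.
rewrite coefD coefC add0r coef_sum (bigD1 i) //= coefZ coefXn eqxx mulr1.
rewrite big1 ?addr0 // => k ki.
by rewrite coefZ coefXn eqSS val_eqE eq_sym (negbTE ki) mulr0.
Qed.

Lemma hyperplane_poly_neq0 g : oriented_hyperplane g -> hyperplane_poly g != 0.
Proof.
case=> [g1_neq0 | g2_neq0].
- apply: contraNneq g1_neq0 => P0; apply/eqP/rowP => i.
  by rewrite -coefS_hyperplane_poly P0 coef0 mxE.
- apply: contraNneq g2_neq0 => P0.
  by rewrite -coef0_hyperplane_poly P0 coef0.
Qed.

Lemma mass_distribution_curve_measure a : mass_distribution (curve_measure a).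
Proof.
have total : curve_measure a setT = 1%E.
  by rewrite curve_measureE preimage_setT setTI lebesgue_measure_unit_itv.
split; [by rewrite total lte01 | split; first by rewrite total ltry].
move=> g g1_neq0; rewrite curve_measureE.
have P_neq0 : hyperplane_poly g != 0 by apply: hyperplane_poly_neq0; left.
have -> : moment_curve @^-1` [set x | affine_eval g x = 0]
    `&` [set` `]a, a + 1[] = [set` roots (hyperplane_poly g) a (a + 1)].
  apply/seteqP; split => t /=.
  - by move=> [gt0 t_in]; rewrite -root_is_roots // /root hyperplane_polyE gt0.
  - move=> t_root; split; last exact: roots_in t_root.
    by have := root_roots t_root; rewrite /root hyperplane_polyE => /eqP.
by apply/countable_lebesgue_measure0/finite_set_countable; exact: finite_seq.
Qed.

Lemma curve_measure_full a (A : set (Rd R d)) :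
  {in `]a, a + 1[, forall t, A (moment_curve t)} -> curve_measure a A = 1%E.
Proof.
move=> A_itv; rewrite curve_measureE -[RHS](lebesgue_measure_unit_itv a).
congr lebesgue_measure; apply/seteqP; split => [t [] // | t t_in].
by split => //; exact: A_itv.
Qed.

Lemma curve_measure_null a (A : set (Rd R d)) :
  {in `]a, a + 1[, forall t, ~ A (moment_curve t)} -> curve_measure a A = 0%E.
Proof.
move=> A_itv; rewrite curve_measureE -(measure0 lebesgue_measure).
congr lebesgue_measure; apply/seteqP.
by split => [t [At t_in] | t []]; exact: A_itv t_in At.
Qed.

Lemma lambda_moment_curve_itv n (L : 'I_n -> 'rV[R]_d * R) (i : interval R) :
    (forall j, {in i, forall t, ~~ root (hyperplane_poly (L j)) t}) ->
  {in i &, forall s t, lambda L (moment_curve s) = lambda L (moment_curve t)}.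
Proof.
move=> no_root s t s_in t_in; rewrite /lambda.
suff -> : [set j | `[< pos_side (L j) (moment_curve s) >]] =
          [set j | `[< pos_side (L j) (moment_curve t) >]] by [].
have same_side j : (0 <= affine_eval (L j) (moment_curve s)) =
                   (0 <= affine_eval (L j) (moment_curve t)).
  rewrite -!hyperplane_polyE -[LHS]sgr_ge0 -[RHS]sgr_ge0.
  by rewrite (polyrN0_itv (no_root j) t_in s_in).
by apply/funext => j; rewrite /pos_side /mkset same_side.
Qed.

Lemma curve_measure_bisected_root n (L : 'I_n -> 'rV[R]_d * R) a :
    curve_measure a (Rplus L) = curve_measure a (Rminus L) ->
  exists j, exists2 t, t \in `]a, a + 1[ & root (hyperplane_poly (L j)) t.
Proof.
move=> bisected; apply: contrapT => no_root.
have {}no_root j :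
    {in `]a, a + 1[, forall t, ~~ root (hyperplane_poly (L j)) t}.
  by move=> t t_in; apply/negP => t_root; apply: no_root; exists j, t.
pose t0 := a + 2^-1.
have t0_in : t0 \in `]a, a + 1[.
  by rewrite in_itv /= ltrDl invr_gt0 ltr0n ltrD2l invf_lt1 ?ltr1n.
have lambda_t0 t : t \in `]a, a + 1[ ->
    lambda L (moment_curve t) = lambda L (moment_curve t0).
  by move=> t_in; apply: (lambda_moment_curve_itv no_root).
have one_neq0 : 1%E <> 0%E :> \bar R by move/eqP; rewrite onee_eq0.
case: (boolP (odd (lambda L (moment_curve t0)))) => parity.
- rewrite (@curve_measure_null _ (Rplus L)) ?(@curve_measure_full _ (Rminus L))
    in bisected.
  + exact: one_neq0 (esym bisected).
  + by move=> t t_in; rewrite /Rminus /= lambda_t0.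
  + by move=> t t_in; rewrite /Rplus /= lambda_t0 // parity.
- rewrite (@curve_measure_full _ (Rplus L)) ?(@curve_measure_null _ (Rminus L))
    in bisected.
  + exact: one_neq0 bisected.
  + by move=> t t_in; rewrite /Rminus /= lambda_t0 // (negbTE parity).
  + by move=> t t_in; rewrite /Rplus /= lambda_t0.
Qed.

End moment_curve.

Theorem mainTheorem9 (R : realType) (n d : nat) :
  (0 < n)%N -> (0 < d)%N ->
  exists mu : 'I_(n * d + 1) -> {measure set (Rd R d) -> \bar R},
    (forall i, mass_distribution (mu i)) /\
    forall L : 'I_n -> 'rV[R]_d * R,
      (forall j, oriented_hyperplane (L j)) -> ~ bisects L mu.
Proof.
move=> _ _; exists (fun k => @curve_measure R d k%:R).
split=> [k | L L_hyp bisected]; first exact: mass_distribution_curve_measure.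
have root_in_itv (k : 'I_(n * d + 1)) : exists jt : 'I_n * R,
    (jt.2 \in `]k%:R, k%:R + 1[) && root (hyperplane_poly (L jt.1)) jt.2.
  have [j [t t_in t_root]] := curve_measure_bisected_root (bisected k).
  by exists (j, t); rewrite t_in t_root.
have [jt jt_root] := choice root_in_itv.
have root_inj : injective (fun k => (jt k).2).
  move=> k1 k2 eq_root; apply/val_inj/(@unit_itv_nat_disjoint R _ _ (jt k1).2).
    by case/andP: (jt_root k1).
  by rewrite eq_root; case/andP: (jt_root k2).
have root_jt k : root (hyperplane_poly (L (jt k).1)) (jt k).2.
  by case/andP: (jt_root k).
have := max_poly_roots_family (fun j => hyperplane_poly_neq0 (L_hyp j))
  (fun j => size_hyperplane_poly _) root_inj root_jt.
by rewrite addn1 ltnn.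
Qed.
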